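(* In the setting of the context (with assumptions (A.1)–(A.3)), suppose the PMM generates infinite sequences $\{(u_k,v_k)\}$, $\{(z_k,w_k)\}$, $\{\gamma_k\}$, $\{\rho_k\}$; define $x_k=z_{k-1}+\lambda w_{k-1}+\lambda(Cv_k-d)$, $y_k=x_k-\lambda(w_{k-1}-Mu_k)$, and for $k\ge1$ $$\Gamma_k=\sum_{j=1}^k\rho_j\gamma_j,\quad \bar u_k=\frac1{\Gamma_k}\sum_{j=1}^k\rho_j\gamma_ju_j,\quad \bar v_k=\frac1{\Gamma_k}\sum_{j=1}^k\rho_j\gamma_jv_j,$$ $$\bar\epsilon_k^u=\frac1{\Gamma_k}\sum_{j=1}^k\rho_j\gamma_j\langle u_j-\bar u_k,-M^*y_j\rangle,\qquad \bar\epsilon_k^v=\frac1{\Gamma_k}\sum_{j=1}^k\rho_j\gamma_j\langle v_j-\bar v_k,-C^*x_j\rangle.$$ Let $d_0$ be the distance from $(z_0,w_0)$ to $S_e(\partial h_1,\partial h_2)$. Then for every integer $k\ge1$, $$\bar\epsilon_k^u+\bar\epsilon_k^v\le\frac1{\Gamma_k}\left[\frac1{\Gamma_k}\sum_{j=1}^k\rho_j\gamma_j\left(\lambda^2\|Mu_j+Cv_j-d\|^2+\|d-Cv_j-w_{j-1}\|^2\right)+4d_0^2\right].$$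
   Context: Let $f:\mathbb{R}^{m_1}\to(-\infty,\infty]$, $g:\mathbb{R}^{m_2}\to(-\infty,\infty]$ be proper closed convex, $M:\mathbb{R}^{m_1}\to\mathbb{R}^n$, $C:\mathbb{R}^{m_2}\to\mathbb{R}^n$ linear, $d\in\mathbb{R}^n$; consider $\min\{f(u)+g(v):Mu+Cv=d\}$ with Lagrangian $L(u,v,z)=f(u)+g(v)+\langle Mu+Cv-d,z\rangle$. A saddle point is $(u^*,v^*,z^* )$ with $L(u^*,v^*,z^* )$ finite and $\min_{(u,v)}L(u,v,z^* )=L(u^*,v^*,z^* )=\max_zL(u^*,v^*,z)$. Let $h_1(z)=f^*(-M^*z)$, $h_2(z)=g^*(-C^*z)+\langle d,z\rangle$ ($^*$ on functions = Fenchel conjugate, on operators = adjoint), and $S_e(\partial h_1,\partial h_2)=\{(z,w)\in\mathbb{R}^n\times\mathbb{R}^n:-w\in\partial h_1(z),\ w\in\partial h_2(z)\}$ (a closed convex set). Standing assumptions: (A.1) $L$ has a saddle point; (A.2) $\mathrm{ri}(\mathrm{dom} f^* )\cap\mathrm{range}(M^* )\ne\emptyset$; (A.3) $\mathrm{ri}(\mathrm{dom} g^* )\cap\mathrm{range}(C^* )\ne\emptyset$. PMM: given $(z_0,w_0)\in\mathbb{R}^n\times\mathbb{R}^n$, $\lambda>0$, $\bar\rho\in[0,1)$, for $k=1,2,\dots$: (1) let $v_k$ be a minimizer of $g(v)+\langle z_{k-1}+\lambda w_{k-1},Cv-d\rangle+\frac\lambda2\|Cv-d\|^2$ and $u_k$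 a minimizer of $f(u)+\langle z_{k-1}+\lambda(Cv_k-d),Mu\rangle+\frac\lambda2\|Mu\|^2$; (2) if $\|Mu_k+Cv_k-d\|+\|Mu_k-w_{k-1}\|=0$ stop; otherwise set $\gamma_k=\dfrac{\lambda\|Cv_k-d+w_{k-1}\|^2+\lambda\langle d-Cv_k-Mu_k,w_{k-1}-Mu_k\rangle}{\|Mu_k+Cv_k-d\|^2+\lambda^2\|Mu_k-w_{k-1}\|^2}$; (3) choose $\rho_k\in[1-\bar\rho,1+\bar\rho]$ and set $z_k=z_{k-1}+\rho_k\gamma_k(Mu_k+Cv_k-d)$, $w_k=w_{k-1}-\rho_k\gamma_k\lambda(w_{k-1}-Mu_k)$. *)

(* Euclidean spaces R^m are row vectors 'rV[R]_m;
   a linear map M : R^m1 -> R^n is a matrix M : 'M[R]_(m1,n) acting by u |-> u *m M;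
   its adjoint is z |-> z *m M^T. *)
From HB Require Import structures.
From mathcomp Require Import all_boot all_order all_algebra.
From mathcomp Require Import all_classical all_reals all_analysis.
Set Implicit Arguments. Unset Strict Implicit. Unset Printing Implicit Defensive.
Import Order.TTheory GRing.Theory Num.Theory.
Import numFieldNormedType.Exports.
Local Open Scope classical_set_scope.
Local Open Scope ring_scope.

Section Defs.
Variable R : realType.

Definition dotp m (a b : 'rV[R]_m) : R := \sum_(i < m) a 0 i * b 0 i.
Definition sqn m (a : 'rV[R]_m) : R := dotp a a.
Definition enorm m (a : 'rV[R]_m) : R := Num.sqrt (sqn a).

Definition proper_fun m (f : 'rV[R]_m -> \bar R) : Prop :=
  (forall x, f x != -oo%E) /\ (exists x, f x \is a fin_num).
Definition closed_fun m (f : 'rV[R]_m -> \bar R) : Prop :=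
  forall t : R, closed [set x | (f x <= t%:E)%E].
Definition convex_fun m (f : 'rV[R]_m -> \bar R) : Prop :=
  forall (x y : 'rV[R]_m) (t : R), 0 < t < 1 ->
    (f (t *: x + (1 - t) *: y)%R <= t%:E * f x + (1 - t)%R%:E * f y)%E.
Definition pcc m (f : 'rV[R]_m -> \bar R) : Prop :=
  [/\ proper_fun f, closed_fun f & convex_fun f].

Definition fconj m (f : 'rV[R]_m -> \bar R) (p : 'rV[R]_m) : \bar R :=
  ereal_sup [set ((dotp p x)%:E - f x)%E | x in [set: 'rV[R]_m]].

Definition edom m (f : 'rV[R]_m -> \bar R) : set 'rV[R]_m :=
  [set x | (f x < +oo)%E].

Definition aff_hull m (A : set 'rV[R]_m) : set 'rV[R]_m :=
  [set y | exists (k : nat) (p : 'I_k -> 'rV[R]_m) (c : 'I_k -> R),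
     [/\ forall i, A (p i), \sum_(i < k) c i = 1 & y = \sum_(i < k) c i *: p i]].
Definition rel_int m (A : set 'rV[R]_m) : set 'rV[R]_m :=
  [set x | A x /\ exists e : R, 0 < e /\
     forall y, aff_hull A y -> enorm (y - x) < e -> A y].

Definition subdiff n (h : 'rV[R]_n -> \bar R) (z : 'rV[R]_n) : set 'rV[R]_n :=
  [set w | h z \is a fin_num /\
     forall z', (h z + (dotp w (z' - z))%:E <= h z')%E].

Definition lagr m1 m2 n (f : 'rV[R]_m1 -> \bar R) (g : 'rV[R]_m2 -> \bar R)
  (M : 'M[R]_(m1, n)) (C : 'M[R]_(m2, n)) (d : 'rV[R]_n) u v z : \bar R :=
  (f u + g v + (dotp (u *m M + v *m C - d) z)%:E)%E.

Definition saddle_point m1 m2 n f g (M : 'M[R]_(m1, n)) (C : 'M[R]_(m2, n)) d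
  (u0 : 'rV[R]_m1) (v0 : 'rV[R]_m2) (z0 : 'rV[R]_n) : Prop :=
  [/\ lagr f g M C d u0 v0 z0 \is a fin_num,
      (forall u v, (lagr f g M C d u0 v0 z0 <= lagr f g M C d u v z0)%E) &
      (forall z, (lagr f g M C d u0 v0 z <= lagr f g M C d u0 v0 z0)%E)].

Definition h1 m1 n (f : 'rV[R]_m1 -> \bar R) (M : 'M[R]_(m1, n)) (z : 'rV[R]_n) :=
  fconj f (- (z *m M^T)).
Definition h2 m2 n (g : 'rV[R]_m2 -> \bar R) (C : 'M[R]_(m2, n)) (d z : 'rV[R]_n) :=
  (fconj g (- (z *m C^T)) + (dotp d z)%:E)%E.
Definition Se m1 m2 n f g (M : 'M[R]_(m1, n)) (C : 'M[R]_(m2, n)) (d : 'rV[R]_n)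
  : set ('rV[R]_n * 'rV[R]_n) :=
  [set zw | subdiff (h1 f M) zw.1 (- zw.2) /\ subdiff (h2 g C d) zw.1 zw.2].

Definition dist2 n (p : 'rV[R]_n * 'rV[R]_n) (S : set ('rV[R]_n * 'rV[R]_n)) : R :=
  Num.sqrt (inf [set sqn (p.1 - q.1) + sqn (p.2 - q.2) | q in S]).

(* The PMM iteration: the sequences (indexed from 1 for u,v,gamma,rho,
   from 0 for z,w) are generated by PMM and it never stops. *)
Definition PMM_run m1 m2 n (f : 'rV[R]_m1 -> \bar R) (g : 'rV[R]_m2 -> \bar R)
  (M : 'M[R]_(m1, n)) (C : 'M[R]_(m2, n)) (d : 'rV[R]_n) (lam rhob : R)
  (u : nat -> 'rV[R]_m1) (v : nat -> 'rV[R]_m2) (z w : nat -> 'rV[R]_n)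
  (gam rho : nat -> R) : Prop :=
  forall k, (1 <= k)%N ->
  [/\ (forall v',
         (g (v k) + (dotp (z k.-1 + lam *: w k.-1) (v k *m C - d)
                     + lam / 2 * sqn (v k *m C - d))%:E
          <= g v' + (dotp (z k.-1 + lam *: w k.-1) (v' *m C - d)
                     + lam / 2 * sqn (v' *m C - d))%:E)%E),
      (forall u',
         (f (u k) + (dotp (z k.-1 + lam *: (v k *m C - d)) (u k *m M)
                     + lam / 2 * sqn (u k *m M))%:E
          <= f u' + (dotp (z k.-1 + lam *: (v k *m C - d)) (u' *m M)
                     + lam / 2 * sqn (u' *m M))%:E)%E),
      enorm (u k *m M + v k *m C - d) + enorm (u k *m M - w k.-1) != 0,
      gam k = (lam * sqn (v k *m C - d + w k.-1)
               + lam * dotp (d - v k *m C - u k *m M) (w k.-1 - u k *m M))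
              / (sqn (u k *m M + v k *m C - d) + lam ^+ 2 * sqn (u k *m M - w k.-1)) /\
      1 - rhob <= rho k <= 1 + rhob &
      (z k = z k.-1 + (rho k * gam k) *: (u k *m M + v k *m C - d)
      /\ w k = w k.-1 - (rho k * gam k * lam) *: (w k.-1 - u k *m M))].

End Defs.

(* PMM is a relaxed projective splitting method for 0 \in \partial h1 z + \partial h2 z.
   The optimality conditions of the two subproblems, read through Fenchel duality, give
   d - C v_j \in \partial h2 (x_j) and -M u_j \in \partial h1 (y_j).  By monotonicity of
   subdifferentials the affine function
     pmm_sep j (Z, W) = <x_j - Z, d - C v_j - W> + <y_j - Z, W - M u_j>
   is therefore nonnegative on S_e, and (z_j, w_j) is a relaxed projection of
   (z_{j-1}, w_{j-1}) onto the half-space {pmm_sep j >= 0}.  Telescoping gives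
   2 sum_j rho_j gam_j pmm_sep j p <= |(z_0, w_0) - p|^2 for every p, and Fejer monotonicity
   with respect to S_e.  At the averaged point p = (ybar_k, d - C vbar_k) the left-hand side
   is 2 Gam_k (epsu_k + epsv_k), while convexity of the squared norm and Fejer monotonicity
   bound the right-hand side by 8 d_0^2 + (2 / Gam_k) sum_j rho_j gam_j
   (lam^2 |M u_j + C v_j - d|^2 + |d - C v_j - w_{j-1}|^2). *)

From HB Require Import structures.
From mathcomp Require Import all_boot all_order all_algebra.
From mathcomp Require Import all_classical all_reals all_analysis.
From mathcomp Require Import ring lra.
Import Order.TTheory GRing.Theory Num.Theory.
Import numFieldNormedType.Exports.
Set Implicit Arguments.
Unset Strict Implicit.
Unset Printing Implicit Defensive.
Local Open Scope classical_set_scope.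
Local Open Scope ring_scope.

Ltac vec_field :=
  rewrite /sqn /dotp;
  repeat progress (rewrite ?(mulrDr, mulrBr, mulrN, mulr_sumr) -?sumrN -?big_split /=);
  apply: eq_bigr => i _; rewrite !mxE; by field.

Section InnerProduct.
Variables (R : realType) (n : nat).
Implicit Types a b c : 'rV[R]_n.

Lemma dotpC a b : dotp a b = dotp b a.
Proof. by apply: eq_bigr => i _; rewrite mulrC. Qed.

Lemma dotpDr a b c : dotp a (b + c) = dotp a b + dotp a c.
Proof. vec_field. Qed.

Lemma dotpBr a b c : dotp a (b - c) = dotp a b - dotp a c.
Proof. vec_field. Qed.

Lemma dotpBl a b c : dotp (b - c) a = dotp b a - dotp c a.
Proof. vec_field. Qed.

Lemma dotpNr a b : dotp a (- b) = - dotp a b.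
Proof. vec_field. Qed.

Lemma dotpNl a b : dotp (- a) b = - dotp a b.
Proof. vec_field. Qed.

Lemma dotpZr a b t : dotp a (t *: b) = t * dotp a b.
Proof. vec_field. Qed.

Lemma dotpZl a b t : dotp (t *: a) b = t * dotp a b.
Proof. vec_field. Qed.

Lemma dotp0r a : dotp a 0 = 0.
Proof. by rewrite /dotp big1 // => i _; rewrite mxE mulr0. Qed.

Lemma dotp_sumr a (I : Type) (r : seq I) (P : pred I) (F : I -> 'rV[R]_n) :
  dotp a (\sum_(j <- r | P j) F j) = \sum_(j <- r | P j) dotp a (F j).
Proof. by elim/big_rec2: _ => [|j x y _ <-]; [exact: dotp0r | exact: dotpDr]. Qed.

Lemma dotp_suml a (I : Type) (r : seq I) (P : pred I) (F : I -> 'rV[R]_n) :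
  dotp (\sum_(j <- r | P j) F j) a = \sum_(j <- r | P j) dotp (F j) a.
Proof. by rewrite dotpC dotp_sumr; apply: eq_bigr => j _; rewrite dotpC. Qed.

Lemma dotp_mulmx_tr m (a : 'rV[R]_m) b (K : 'M[R]_(m, n)) :
  dotp a (b *m K^T) = dotp (a *m K) b.
Proof.
rewrite /dotp; transitivity (\sum_(i < m) \sum_(j < n) a 0 i * K i j * b 0 j).
  apply: eq_bigr => i _; rewrite !mxE mulr_sumr.
  by apply: eq_bigr => j _; rewrite !mxE mulrA mulrAC.
rewrite exchange_big; apply: eq_bigr => j _; rewrite !mxE mulr_suml.
by apply: eq_bigr.
Qed.

Lemma sqn_ge0 a : 0 <= sqn a.
Proof. by apply: sumr_ge0 => i _; rewrite -expr2 sqr_ge0. Qed.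

Lemma sqn_eq0 a : (sqn a == 0) = (a == 0).
Proof.
apply/eqP/eqP => [a0|->]; last by rewrite /sqn dotp0r.
apply/rowP => i; apply/eqP; rewrite mxE -[_ == 0]orbb -mulf_eq0; apply/eqP.
by apply: (psumr_eq0P _ a0) => // j _; rewrite -expr2 sqr_ge0.
Qed.

Lemma sqnB_le a b c : sqn (a - c) <= 2 * sqn (a - b) + 2 * sqn (b - c).
Proof.
have -> : 2 * sqn (a - b) + 2 * sqn (b - c) = sqn (a - c) + sqn (a - 2%:R *: b + c).
  by vec_field.
by rewrite lerDl sqn_ge0.
Qed.

Lemma sqnBC a b : sqn (a - b) = sqn (b - a).
Proof. vec_field. Qed.

Lemma dotp_mulmx_trB m (x : 'rV[R]_m) a b (K : 'M[R]_(m, n)) :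
  dotp x (- (b *m K^T) - - (a *m K^T)) = dotp (- (x *m K)) (b - a).
Proof.
by rewrite opprK addrC -mulmxBl dotp_mulmx_tr dotpNl -dotpNr opprB.
Qed.

Lemma quad_increment a b c lam t :
  dotp a (b + t *: c) + lam / 2 * sqn (b + t *: c) - (dotp a b + lam / 2 * sqn b)
  = t * dotp (a + lam *: b) c + t ^+ 2 * (lam / 2 * sqn c).
Proof. vec_field. Qed.

End InnerProduct.

Lemma ler_of_forall_addr_scaled (R : realFieldType) (a b c : R) :
  0 <= c -> (forall t, 0 < t < 1 -> a <= b + t * c) -> a <= b.
Proof.
move=> c_ge0 hab; apply/ler_addgt0Pr => e e_gt0.
have D_gt0 : 0 < e + c + 1 by lra.
have t_gt0 : 0 < e / (e + c + 1) by rewrite divr_gt0.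
have t_lt1 : e / (e + c + 1) < 1 by rewrite ltr_pdivrMr // mul1r; lra.
apply: le_trans (hab (e / (e + c + 1)) _) _; first by rewrite t_gt0 t_lt1.
by rewrite lerD2l mulrAC ler_pdivrMr //; nra.
Qed.

Section Subdifferential.
Variable R : realType.

Lemma subdiff_of_argmin m n (f : 'rV[R]_m -> \bar R) (K : 'M[R]_(m, n))
    (a e : 'rV[R]_n) (lam : R) (x0 : 'rV[R]_m) :
  proper_fun f -> convex_fun f -> 0 <= lam ->
  (forall x, (f x0 + (dotp a (x0 *m K - e) + lam / 2 * sqn (x0 *m K - e))%:E
              <= f x + (dotp a (x *m K - e) + lam / 2 * sqn (x *m K - e))%:E)%E) ->
  subdiff f x0 (- ((a + lam *: (x0 *m K - e)) *m K^T)).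
Proof.
move=> [f_nm [x1 fx1_fin]] f_cvx lam_ge0 x0_min.
have fx0_fin : f x0 \is a fin_num.
  have := x0_min x1; have := f_nm x0.
  by move: fx1_fin; case: (f x1) => // r _; case: (f x0).
split=> // x; have := f_nm x; case fx: (f x) => [r||] // _; last by rewrite leey.
move: fx0_fin; case fx0: (f x0) => [r0||] // _; rewrite -EFinD lee_fin.
set b := x0 *m K - e; set c := (x - x0) *m K.
rewrite dotpNl dotpC dotp_mulmx_tr -/c dotpC.
apply: (@ler_of_forall_addr_scaled _ _ _ (lam / 2 * sqn c)) => [|t /andP[t_gt0 t_lt1]].
  by rewrite mulr_ge0 ?divr_ge0 ?sqn_ge0.
have xt_K : (t *: x + (1 - t) *: x0) *m K - e = b + t *: c.
  have -> : t *: x + (1 - t) *: x0 = x0 + t *: (x - x0).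
    by apply/rowP => i; rewrite !mxE; ring.
  by rewrite mulmxDl -scalemxAl addrAC.
have := x0_min (t *: x + (1 - t) *: x0); rewrite fx0 xt_K => xt_min.
have := f_cvx x x0 t; rewrite t_gt0 t_lt1 fx fx0 -!EFinM -EFinD => /(_ isT) xt_cvx.
have := le_trans xt_min (leeD2r _ xt_cvx); rewrite -!EFinD lee_fin => ineq.
have := quad_increment a b c lam t.
rewrite -(ler_pM2l t_gt0); nra.
Qed.

Lemma fenchel_young_eq m (f : 'rV[R]_m -> \bar R) x s :
  subdiff f x s -> fconj f s = ((dotp s x)%:E - f x)%E.
Proof.
case=> fx_fin x_sub; apply/eqP; rewrite eq_le; apply/andP; split; last first.
  by apply: ereal_sup_ubound; exists x.
apply: ge_ereal_sup => _ [y _ <-]; have := x_sub y.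
move: fx_fin; case: (f x) => // r _; case: (f y) => [r'||] //; last by rewrite leNye.
by rewrite -!EFinB -EFinD !lee_fin dotpBr; lra.
Qed.

Lemma subdiff_fconj m (f : 'rV[R]_m -> \bar R) x s :
  subdiff f x s -> subdiff (fconj f) s x.
Proof.
move=> xs; rewrite /subdiff (fenchel_young_eq xs); case: xs => fx_fin _.
split; first by rewrite fin_numB fx_fin.
move=> s'; apply: (@le_trans _ _ ((dotp s' x)%:E - f x)%E); last first.
  by apply: ereal_sup_ubound; exists x.
move: fx_fin; case: (f x) => // r _.
by rewrite -EFinB -EFinD lee_fin dotpC dotpBr (dotpC x) (dotpC x); lra.
Qed.

Lemma subdiff_h1 m n (f : 'rV[R]_m -> \bar R) (M : 'M[R]_(m, n)) z u :
  subdiff (fconj f) (- (z *m M^T)) u -> subdiff (h1 f M) z (- (u *m M)).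
Proof. by case=> fin sub; split=> // z'; rewrite -dotp_mulmx_trB; exact: sub. Qed.

Lemma subdiff_h2 m n (g : 'rV[R]_m -> \bar R) (C : 'M[R]_(m, n)) d z v :
  subdiff (fconj g) (- (z *m C^T)) v -> subdiff (h2 g C d) z (d - v *m C).
Proof.
case=> fin sub; split; first by rewrite fin_numD fin.
move=> z'; have := sub (- (z' *m C^T)); rewrite dotp_mulmx_trB /h2.
move: fin; case: (fconj g (- (z *m C^T))) => // r _ ineq.
apply: le_trans (leeD2r (dotp d z')%:E ineq); rewrite -!EFinD lee_fin.
by rewrite dotpBl dotpNl !dotpBr; lra.
Qed.

Lemma subdiff_monotone n (h : 'rV[R]_n -> \bar R) z z' a b :
  subdiff h z a -> subdiff h z' b -> 0 <= dotp (a - b) (z - z').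
Proof.
case=> hz_fin hz [hz'_fin hz']; have := hz z'; have := hz' z.
move: hz_fin hz'_fin; case: (h z) => // r _; case: (h z') => // r' _.
rewrite -!EFinD !lee_fin -(opprB z) dotpNr dotpBl; lra.
Qed.

End Subdifferential.

Section SaddlePoint.
Variables (R : realType) (m1 m2 n : nat) (f : 'rV[R]_m1 -> \bar R)
  (g : 'rV[R]_m2 -> \bar R) (M : 'M[R]_(m1, n)) (C : 'M[R]_(m2, n)) (d : 'rV[R]_n)
  (u0 : 'rV[R]_m1) (v0 : 'rV[R]_m2) (z0 : 'rV[R]_n).
Hypotheses (pf : pcc f) (pg : pcc g) (saddle : saddle_point f g M C d u0 v0 z0).

Lemma saddle_point_feasible : u0 *m M + v0 *m C = d.
Proof.
case: saddle => fin _ z0_max; apply/eqP.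
rewrite -subr_eq0 -sqn_eq0 eq_le sqn_ge0 andbT.
move: fin; rewrite /lagr fin_numD => /andP[fg_fin _].
have := z0_max (z0 + (u0 *m M + v0 *m C - d)).
by rewrite /lagr leeD2lE // lee_fin dotpDr gerDl.
Qed.

Lemma saddle_point_subdiff_f : subdiff f u0 (- (z0 *m M^T)).
Proof.
case: saddle => fin uv_min _; move: fin; rewrite /lagr !fin_numD => /andP[/andP[_ gv0_fin] _].
suff: subdiff f u0 (- ((z0 + 0 *: (u0 *m M - (d - v0 *m C))) *m M^T)).
  by rewrite scale0r addr0.
case: pf => f_proper _ f_cvx; apply: subdiff_of_argmin f_proper f_cvx (lexx 0) _ => x.
have := uv_min x v0; rewrite /lagr addeAC [X in (_ <= X)%E]addeAC leeD2rE //.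
by rewrite !mul0r !addr0 !(dotpC z0) !opprB !addrA.
Qed.

Lemma saddle_point_subdiff_g : subdiff g v0 (- (z0 *m C^T)).
Proof.
case: saddle => fin uv_min _; move: fin; rewrite /lagr !fin_numD => /andP[/andP[fu0_fin _] _].
suff: subdiff g v0 (- ((z0 + 0 *: (v0 *m C - (d - u0 *m M))) *m C^T)).
  by rewrite scale0r addr0.
case: pg => g_proper _ g_cvx; apply: subdiff_of_argmin g_proper g_cvx (lexx 0) _ => y.
have := uv_min u0 y; rewrite /lagr -!addeA leeD2lE //.
by rewrite !mul0r !addr0 !(dotpC z0) !opprB !(addrCA _ (u0 *m M)) !addrA.
Qed.

Lemma saddle_point_Se : Se f g M C d (z0, u0 *m M).
Proof.
split; first exact/subdiff_h1/subdiff_fconj/saddle_point_subdiff_f.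
have -> : u0 *m M = d - v0 *m C by rewrite -saddle_point_feasible addrK.
exact/subdiff_h2/subdiff_fconj/saddle_point_subdiff_g.
Qed.

End SaddlePoint.

Definition wmean (R : realType) m (c : nat -> R) (a : nat -> 'rV[R]_m) k : 'rV[R]_m :=
  (\sum_(1 <= j < k.+1) c j)^-1 *: \sum_(1 <= j < k.+1) c j *: a j.

Section WeightedMean.
Variables (R : realType) (m : nat) (c : nat -> R) (k : nat).
Local Notation G := (\sum_(1 <= j < k.+1) c j).
Hypothesis G_neq0 : G != 0.

Lemma sum_scale_wmean (a : nat -> 'rV[R]_m) :
  \sum_(1 <= j < k.+1) c j *: a j = G *: wmean c a k.
Proof. by rewrite /wmean scalerA mulfV // scale1r. Qed.

Lemma wmean_subl (b : 'rV[R]_m) (a : nat -> 'rV[R]_m) :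
  wmean c (fun j => b - a j) k = b - wmean c a k.
Proof.
apply: (scalerI G_neq0); rewrite -sum_scale_wmean scalerBr -sum_scale_wmean.
by under eq_bigr do rewrite scalerBr; rewrite sumrB scaler_suml.
Qed.

Lemma wmean_sqn_le (a : nat -> 'rV[R]_m) (b : 'rV[R]_m) :
  (forall j, (1 <= j)%N -> 0 <= c j) ->
  G * sqn (b - wmean c a k) <= \sum_(1 <= j < k.+1) c j * sqn (b - a j).
Proof.
move=> c_ge0; set mu := wmean c a k.
have split_sqn j : sqn (b - a j) = sqn (b - mu) + 2 * dotp (b - mu) (mu - a j) + sqn (mu - a j).
  by vec_field.
have centered : \sum_(1 <= j < k.+1) c j *: (mu - a j) = 0.
  under eq_bigr do rewrite scalerBr.
  by rewrite sumrB -scaler_suml sum_scale_wmean subrr.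
under [X in _ <= X]eq_bigr do rewrite split_sqn !mulrDr.
rewrite !big_split /= -mulr_suml.
have -> : \sum_(1 <= j < k.+1) c j * (2 * dotp (b - mu) (mu - a j)) = 0.
  under eq_bigr do rewrite mulrCA -dotpZr.
  by rewrite -mulr_sumr -dotp_sumr centered dotp0r mulr0.
rewrite addr0 lerDl big_nat_cond sumr_ge0 // => j /andP[/andP[j_ge1 _] _].
by rewrite mulr_ge0 ?c_ge0 ?sqn_ge0.
Qed.

End WeightedMean.

Lemma wmean_mulmx (R : realType) m n (c : nat -> R) (a : nat -> 'rV[R]_m)
    (K : 'M[R]_(m, n)) k :
  wmean c a k *m K = wmean c (fun j => a j *m K) k.
Proof.
rewrite /wmean -scalemxAl mulmx_suml; congr (_ *: _).
by apply: eq_bigr => j _; rewrite scalemxAl.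
Qed.

Lemma lb_le_dist2_sqr (R : realType) n (p1 p2 : 'rV[R]_n)
    (S : set ('rV[R]_n * 'rV[R]_n)) a :
  S !=set0 -> (forall Z W, S (Z, W) -> a <= sqn (p1 - Z) + sqn (p2 - W)) ->
  a <= dist2 (p1, p2) S ^+ 2.
Proof.
move=> [q Sq] a_lb.
have D_ne : [set sqn (p1 - q.1) + sqn (p2 - q.2) | q in S] !=set0.
  by exists (sqn (p1 - q.1) + sqn (p2 - q.2)), q.
rewrite sqr_sqrtr; last by apply: lb_le_inf D_ne _ => _ [q' _ <-]; rewrite addr_ge0 ?sqn_ge0.
by apply: lb_le_inf D_ne _ => _ [[Z W] SZW <-]; exact: a_lb.
Qed.

Section Fejer.
Variables (R : realType) (n : nat) (z w U V : nat -> 'rV[R]_n) (d : 'rV[R]_n) (lam : R)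
  (gam rho : nat -> R).

Definition pmm_x j := z j.-1 + lam *: w j.-1 + lam *: (V j - d).
Definition pmm_y j := pmm_x j - lam *: (w j.-1 - U j).
Definition pmm_sep j Z W := dotp (pmm_x j - Z) (d - V j - W) + dotp (pmm_y j - Z) (W - U j).

Hypotheses
  (z_step : forall j, (1 <= j)%N -> z j = z j.-1 + (rho j * gam j) *: (U j + V j - d))
  (w_step : forall j, (1 <= j)%N -> w j = w j.-1 - (rho j * gam j * lam) *: (w j.-1 - U j))
  (gam_eq : forall j, (1 <= j)%N ->
     gam j * (sqn (U j + V j - d) + lam ^+ 2 * sqn (U j - w j.-1))
     = lam * sqn (V j - d + w j.-1) + lam * dotp (d - V j - U j) (w j.-1 - U j))
  (gam_ge0 : forall j, (1 <= j)%N -> 0 <= gam j)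
  (rho_ge0_le2 : forall j, (1 <= j)%N -> 0 <= rho j <= 2).

Local Notation tau := (fun j => rho j * gam j).
Local Notation Gam k := (\sum_(1 <= j < k.+1) rho j * gam j).

Lemma rho_gam_ge0 j : (1 <= j)%N -> 0 <= rho j * gam j.
Proof.
by move=> j_ge1; case/andP: (rho_ge0_le2 j_ge1) => rho_ge0 _; rewrite mulr_ge0 ?gam_ge0.
Qed.

(* pmm_sep j is affine with gradient D_j := (U_j + V_j - d, lam (U_j - w_{j-1})) and takes
   the value -gam_j |D_j|^2 at (z_{j-1}, w_{j-1}), while
   (z_j, w_j) = (z_{j-1}, w_{j-1}) + rho_j gam_j D_j. *)
Lemma pmm_step_sqn j Z W : (1 <= j)%N ->
  sqn (z j - Z) + sqn (w j - W) = sqn (z j.-1 - Z) + sqn (w j.-1 - W)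
    - 2 * (rho j * gam j) * pmm_sep j Z W
    - rho j * gam j * (2 - rho j) * (gam j * (sqn (U j + V j - d) + lam ^+ 2 * sqn (U j - w j.-1))).
Proof.
move=> j_ge1; rewrite z_step // w_step // gam_eq //.
transitivity (sqn (z j.-1 - Z) + sqn (w j.-1 - W) - 2 * (rho j * gam j) * pmm_sep j Z W
  - 2 * (rho j * gam j) * (lam * sqn (V j - d + w j.-1) + lam * dotp (d - V j - U j) (w j.-1 - U j))
  + (rho j * gam j) ^+ 2 * (sqn (U j + V j - d) + lam ^+ 2 * sqn (U j - w j.-1))).
  by rewrite /pmm_sep /pmm_y /pmm_x; vec_field.
by rewrite -gam_eq //; ring.
Qed.

Lemma pmm_sep_telescope k Z W :
  \sum_(1 <= j < k.+1) 2 * (rho j * gam j) * pmm_sep j Z W + (sqn (z k - Z) + sqn (w k - W))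
  <= sqn (z 0 - Z) + sqn (w 0 - W).
Proof.
elim: k => [|k IH]; first by rewrite big_geq // add0r.
rewrite big_nat_recr //= pmm_step_sqn //=.
have [rho_ge0 rho_le2] := andP (rho_ge0_le2 (ltn0Sn k)).
have : 0 <= rho k.+1 * gam k.+1 * (2 - rho k.+1)
              * (gam k.+1 * (sqn (U k.+1 + V k.+1 - d) + lam ^+ 2 * sqn (U k.+1 - w k))).
  apply: mulr_ge0; first by rewrite mulr_ge0 ?rho_gam_ge0 // subr_ge0.
  by rewrite mulr_ge0 ?gam_ge0 // addr_ge0 ?sqn_ge0 // mulr_ge0 ?sqr_ge0 ?sqn_ge0.
lra.
Qed.

Lemma sum_pmm_sep_wmean k : Gam k != 0 ->
  \sum_(1 <= j < k.+1) rho j * gam j * pmm_sep j (wmean tau pmm_y k) (d - wmean tau V k)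
  = \sum_(1 <= j < k.+1) rho j * gam j *
      (dotp (wmean tau U k - U j) (pmm_y j) + dotp (wmean tau V k - V j) (pmm_x j)).
Proof.
move=> G_neq0; set G := Gam k.
set Ub := wmean tau U k; set Vb := wmean tau V k; set Yb := wmean tau pmm_y k.
have sep_split j : pmm_sep j Yb (d - Vb)
    = dotp (Ub - U j) (pmm_y j) + dotp (Vb - V j) (pmm_x j)
      + (dotp (pmm_y j) (d - Ub - Vb) - dotp Yb (d - U j - V j)).
  by rewrite /pmm_sep; vec_field.
have sum_y : \sum_(1 <= j < k.+1) (rho j * gam j) *: pmm_y j = G *: Yb.
  exact: sum_scale_wmean.
have sum_res : \sum_(1 <= j < k.+1) (rho j * gam j) *: (d - U j - V j) = G *: (d - Ub - Vb).
  under eq_bigr do rewrite !scalerBr.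
  by rewrite !sumrB -scaler_suml !sum_scale_wmean // !scalerBr.
have cross_sum : \sum_(1 <= j < k.+1) rho j * gam j *
    (dotp (pmm_y j) (d - Ub - Vb) - dotp Yb (d - U j - V j)) = 0.
  under eq_bigr do rewrite mulrBr -dotpZl -dotpZr.
  by rewrite sumrB -dotp_suml -dotp_sumr sum_y sum_res dotpZl dotpZr subrr.
transitivity (\sum_(1 <= j < k.+1) rho j * gam j *
      (dotp (Ub - U j) (pmm_y j) + dotp (Vb - V j) (pmm_x j))
    + \sum_(1 <= j < k.+1) rho j * gam j *
      (dotp (pmm_y j) (d - Ub - Vb) - dotp Yb (d - U j - V j))); last first.
  by rewrite cross_sum addr0.
by rewrite -big_split; apply: eq_bigr => j _; rewrite sep_split mulrDr.
Qed.

Section SepNonneg.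
Variables Zs Ws : 'rV[R]_n.
Hypothesis sep_ge0 : forall j, (1 <= j)%N -> 0 <= pmm_sep j Zs Ws.

Lemma pmm_fejer k : sqn (z k - Zs) + sqn (w k - Ws) <= sqn (z 0 - Zs) + sqn (w 0 - Ws).
Proof.
apply: le_trans (pmm_sep_telescope k Zs Ws); rewrite lerDr.
rewrite big_nat_cond sumr_ge0 // => j /andP[/andP[j_ge1 _] _].
by rewrite mulr_ge0 ?sep_ge0 // mulr_ge0 ?rho_gam_ge0.
Qed.

Lemma pmm_anchor_sqn j : (1 <= j)%N ->
  sqn (z 0 - pmm_y j) + sqn (w 0 - (d - V j))
  <= 8 * (sqn (z 0 - Zs) + sqn (w 0 - Ws))
     + 2 * (lam ^+ 2 * sqn (U j + V j - d) + sqn (d - V j - w j.-1)).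
Proof.
move=> j_ge1; have := pmm_fejer j.-1.
have := sqnB_le (z 0) (z j.-1) (pmm_y j); have := sqnB_le (w 0) (w j.-1) (d - V j).
have := sqnB_le (z 0) Zs (z j.-1); have := sqnB_le (w 0) Ws (w j.-1).
rewrite (sqnBC Zs) (sqnBC Ws) (sqnBC (w j.-1) (d - V j)).
have -> : sqn (z j.-1 - pmm_y j) = lam ^+ 2 * sqn (U j + V j - d).
  by rewrite /pmm_y /pmm_x; vec_field.
lra.
Qed.

Lemma pmm_ergodic_bound k : 0 < Gam k ->
  \sum_(1 <= j < k.+1) rho j * gam j *
    (dotp (wmean tau U k - U j) (pmm_y j) + dotp (wmean tau V k - V j) (pmm_x j))
  <= (Gam k)^-1 * \sum_(1 <= j < k.+1) rho j * gam j *
         (lam ^+ 2 * sqn (U j + V j - d) + sqn (d - V j - w j.-1))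
     + 4 * (sqn (z 0 - Zs) + sqn (w 0 - Ws)).
Proof.
move=> G_gt0; have G_neq0 := lt0r_neq0 G_gt0.
rewrite -sum_pmm_sep_wmean //.
set G := Gam k in G_gt0 G_neq0 *.
set S := \sum_(1 <= j < k.+1) rho j * gam j * (_ + _).
set D0 := sqn (z 0 - Zs) + sqn (w 0 - Ws).
set Yb := wmean tau pmm_y k; set Vb := wmean tau V k.
have telescope : 2 * \sum_(1 <= j < k.+1) rho j * gam j * pmm_sep j Yb (d - Vb)
    <= sqn (z 0 - Yb) + sqn (w 0 - (d - Vb)).
  rewrite mulr_sumr; under eq_bigr do rewrite mulrA.
  by apply: le_trans (pmm_sep_telescope k Yb (d - Vb)); rewrite lerDl addr_ge0 ?sqn_ge0.
have jensen : G * (sqn (z 0 - Yb) + sqn (w 0 - (d - Vb)))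
    <= \sum_(1 <= j < k.+1) rho j * gam j * (sqn (z 0 - pmm_y j) + sqn (w 0 - (d - V j))).
  under [X in _ <= X]eq_bigr do rewrite mulrDr.
  rewrite mulrDr big_split /=; apply: lerD; first exact: wmean_sqn_le G_neq0 _ _ rho_gam_ge0.
  by rewrite /Vb -wmean_subl //; exact: wmean_sqn_le G_neq0 _ _ rho_gam_ge0.
have anchor : \sum_(1 <= j < k.+1) rho j * gam j * (sqn (z 0 - pmm_y j) + sqn (w 0 - (d - V j)))
    <= \sum_(1 <= j < k.+1) rho j * gam j *
         (8 * D0 + 2 * (lam ^+ 2 * sqn (U j + V j - d) + sqn (d - V j - w j.-1))).
  rewrite big_nat_cond [X in _ <= X]big_nat_cond; apply: ler_sum => j /andP[/andP[j_ge1 _] _].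
  by apply: ler_wpM2l; [exact: rho_gam_ge0 | exact: pmm_anchor_sqn].
have anchor_sum : \sum_(1 <= j < k.+1) rho j * gam j *
    (8 * D0 + 2 * (lam ^+ 2 * sqn (U j + V j - d) + sqn (d - V j - w j.-1)))
    = 8 * D0 * G + 2 * S.
  by rewrite /G /S !mulr_sumr -big_split /=; apply: eq_bigr => j _; ring.
rewrite -(ler_pM2l G_gt0) mulrDr mulrA mulfV // mul1r.
have := ler_wpM2l (ltW G_gt0) telescope; lra.
Qed.

End SepNonneg.
End Fejer.

Section PMMRun.
Variables (R : realType) (m1 m2 n : nat) (f : 'rV[R]_m1 -> \bar R) (g : 'rV[R]_m2 -> \bar R)
  (M : 'M[R]_(m1, n)) (C : 'M[R]_(m2, n)) (d : 'rV[R]_n) (lam rhob : R)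
  (u : nat -> 'rV[R]_m1) (v : nat -> 'rV[R]_m2) (z w : nat -> 'rV[R]_n) (gam rho : nat -> R).
Hypotheses (pf : pcc f) (pg : pcc g) (lam_gt0 : 0 < lam) (rhob_lt1 : rhob < 1)
  (run : PMM_run f g M C d lam rhob u v z w gam rho).

Local Notation U := (fun j => u j *m M).
Local Notation V := (fun j => v j *m C).
Local Notation tau := (fun j => rho j * gam j).
Local Notation Gam k := (\sum_(1 <= j < k.+1) rho j * gam j).

Lemma pmm_z_step j : (1 <= j)%N -> z j = z j.-1 + (rho j * gam j) *: (U j + V j - d).
Proof. by move=> j_ge1; case: (run j_ge1) => _ _ _ _ []. Qed.

Lemma pmm_w_step j : (1 <= j)%N -> w j = w j.-1 - (rho j * gam j * lam) *: (w j.-1 - U j).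
Proof. by move=> j_ge1; case: (run j_ge1) => _ _ _ _ []. Qed.

Lemma pmm_residual_gt0 j : (1 <= j)%N ->
  0 < sqn (u j *m M + v j *m C - d) + sqn (u j *m M - w j.-1).
Proof.
move=> j_ge1; case: (run j_ge1) => _ _ + _ _.
set a := u j *m M + v j *m C - d; set b := u j *m M - w j.-1 => ab_neq0.
rewrite lt_def addr_ge0 ?sqn_ge0 // andbT; apply: contra ab_neq0 => /eqP ab0.
have /eqP : sqn a = 0 by have := sqn_ge0 a; have := sqn_ge0 b; lra.
have /eqP : sqn b = 0 by have := sqn_ge0 a; have := sqn_ge0 b; lra.
by rewrite !sqn_eq0 => /eqP-> /eqP->; rewrite /enorm /sqn dotp0r sqrtr0 addr0.
Qed.

Lemma pmm_denom_gt0 j : (1 <= j)%N ->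
  0 < sqn (u j *m M + v j *m C - d) + lam ^+ 2 * sqn (u j *m M - w j.-1).
Proof.
move=> j_ge1; have := pmm_residual_gt0 j_ge1.
set a := u j *m M + v j *m C - d; set b := u j *m M - w j.-1 => ab_gt0.
have [b_gt0 | b_le0] := ltrP 0 (sqn b).
  by rewrite ltr_wpDl ?sqn_ge0 // mulr_gt0 // exprn_gt0.
have -> : sqn b = 0 by have := sqn_ge0 b; lra.
by rewrite mulr0 addr0; have := sqn_ge0 b; lra.
Qed.

Lemma pmm_gam_eq j : (1 <= j)%N ->
  gam j * (sqn (u j *m M + v j *m C - d) + lam ^+ 2 * sqn (u j *m M - w j.-1))
  = lam * sqn (v j *m C - d + w j.-1) + lam * dotp (d - v j *m C - u j *m M) (w j.-1 - u j *m M).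
Proof.
move=> j_ge1; case: (run j_ge1) => _ _ _ [-> _] _.
by rewrite divfK // lt0r_neq0 ?pmm_denom_gt0.
Qed.

Lemma pmm_gam_gt0 j : (1 <= j)%N -> 0 < gam j.
Proof.
move=> j_ge1; case: (run j_ge1) => _ _ _ [-> _] _.
rewrite divr_gt0 ?pmm_denom_gt0 //.
have := pmm_residual_gt0 j_ge1; have := sqn_ge0 (v j *m C - d + w j.-1).
have -> : lam * sqn (v j *m C - d + w j.-1)
          + lam * dotp (d - v j *m C - u j *m M) (w j.-1 - u j *m M)
    = lam / 2 * (sqn (u j *m M + v j *m C - d) + sqn (u j *m M - w j.-1)
                 + sqn (v j *m C - d + w j.-1)).
  by vec_field.
move=> c_ge0 ab_gt0; rewrite mulr_gt0 ?divr_gt0 //; lra.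
Qed.

Lemma pmm_rho_gt0_le2 j : (1 <= j)%N -> 0 < rho j <= 2.
Proof.
move=> j_ge1; case: (run j_ge1) => _ _ _ [_ /andP[rho_lb rho_ub]] _.
apply/andP; split; first by apply: lt_le_trans rho_lb; rewrite subr_gt0.
exact: le_trans rho_ub (lerD (lexx 1) (ltW rhob_lt1)).
Qed.

Lemma pmm_rho_gam_gt0 j : (1 <= j)%N -> 0 < rho j * gam j.
Proof.
by move=> j_ge1; case/andP: (pmm_rho_gt0_le2 j_ge1) => rho_gt0 _; rewrite mulr_gt0 ?pmm_gam_gt0.
Qed.

Lemma pmm_Gam_gt0 k : (1 <= k)%N -> 0 < Gam k.
Proof.
move=> k_ge1; rewrite big_nat_recr //= ltr_wpDl ?pmm_rho_gam_gt0 //.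
by rewrite big_nat_cond sumr_ge0 // => j /andP[/andP[j_ge1 _] _]; rewrite ltW ?pmm_rho_gam_gt0.
Qed.

Lemma pmm_subdiff_f j : (1 <= j)%N ->
  subdiff f (u j) (- (pmm_y z w U V d lam j *m M^T)).
Proof.
move=> j_ge1; case: (run j_ge1) => _ u_min _ _ _; case: pf => f_proper _ f_cvx.
have -> : pmm_y z w U V d lam j = z j.-1 + lam *: (v j *m C - d) + lam *: (u j *m M - 0).
  by rewrite /pmm_y /pmm_x subr0; apply/rowP => i; rewrite !mxE; ring.
apply: subdiff_of_argmin f_proper f_cvx (ltW lam_gt0) _ => x.
by rewrite !subr0; exact: u_min.
Qed.

Lemma pmm_subdiff_g j : (1 <= j)%N -> subdiff g (v j) (- (pmm_x z w V d lam j *m C^T)).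
Proof.
move=> j_ge1; case: (run j_ge1) => v_min _ _ _ _; case: pg => g_proper _ g_cvx.
exact: subdiff_of_argmin g_proper g_cvx (ltW lam_gt0) v_min.
Qed.

Lemma pmm_sep_ge0 Zs Ws j : Se f g M C d (Zs, Ws) -> (1 <= j)%N ->
  0 <= pmm_sep z w U V d lam j Zs Ws.
Proof.
move=> [/= h1_sub h2_sub] j_ge1; apply: addr_ge0.
  have := subdiff_monotone (subdiff_h2 d (subdiff_fconj (pmm_subdiff_g j_ge1))) h2_sub.
  by rewrite dotpC.
have := subdiff_monotone (subdiff_h1 (subdiff_fconj (pmm_subdiff_f j_ge1))) h1_sub.
by rewrite dotpC opprK [- _ + Ws]addrC.
Qed.

Lemma pmm_eps_bound k Zs Ws : (1 <= k)%N -> Se f g M C d (Zs, Ws) ->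
  (Gam k)^-1 * \sum_(1 <= j < k.+1) rho j * gam j *
      dotp (u j - wmean tau u k) (- (pmm_y z w U V d lam j *m M^T))
  + (Gam k)^-1 * \sum_(1 <= j < k.+1) rho j * gam j *
      dotp (v j - wmean tau v k) (- (pmm_x z w V d lam j *m C^T))
  <= (Gam k)^-1 * ((Gam k)^-1 * \sum_(1 <= j < k.+1) rho j * gam j *
               (lam ^+ 2 * sqn (u j *m M + v j *m C - d) + sqn (d - v j *m C - w j.-1))
             + 4 * (sqn (z 0 - Zs) + sqn (w 0 - Ws))).
Proof.
move=> k_ge1 Se_ZW; rewrite -mulrDr ler_pM2l ?invr_gt0 ?pmm_Gam_gt0 // -big_split /=.
under eq_bigr do rewrite -mulrDr !dotpNr !dotp_mulmx_tr -!dotpNl !mulmxBl !opprB !wmean_mulmx.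
apply: pmm_ergodic_bound => //.
- exact: pmm_z_step.
- exact: pmm_w_step.
- exact: pmm_gam_eq.
- by move=> j j_ge1; rewrite ltW ?pmm_gam_gt0.
- by move=> j j_ge1; case/andP: (pmm_rho_gt0_le2 j_ge1) => /ltW-> ->.
- by move=> j; exact: pmm_sep_ge0.
- exact: pmm_Gam_gt0.
Qed.

End PMMRun.

Theorem mainTheorem7 (R : realType) (m1 m2 n : nat)
  (f : 'rV[R]_m1 -> \bar R) (g : 'rV[R]_m2 -> \bar R)
  (M : 'M[R]_(m1, n)) (C : 'M[R]_(m2, n)) (d : 'rV[R]_n)
  (lam rhob : R)
  (u : nat -> 'rV[R]_m1) (v : nat -> 'rV[R]_m2) (z w : nat -> 'rV[R]_n)
  (gam rho : nat -> R) :
  pcc f -> pcc g ->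
  (exists u0 v0 z0, saddle_point f g M C d u0 v0 z0) ->
  (exists p, rel_int (edom (fconj f)) p /\ exists q : 'rV[R]_n, p = q *m M^T) ->
  (exists p, rel_int (edom (fconj g)) p /\ exists q : 'rV[R]_n, p = q *m C^T) ->
  0 < lam -> 0 <= rhob < 1 ->
  PMM_run f g M C d lam rhob u v z w gam rho ->
  let x := fun k => z k.-1 + lam *: w k.-1 + lam *: (v k *m C - d) in
  let y := fun k => x k - lam *: (w k.-1 - u k *m M) in
  let Gam := fun k => \sum_(1 <= j < k.+1) rho j * gam j in
  let ubar := fun k => (Gam k)^-1 *: \sum_(1 <= j < k.+1) (rho j * gam j) *: u j in
  let vbar := fun k => (Gam k)^-1 *: \sum_(1 <= j < k.+1) (rho j * gam j) *: v j in
  let epsu := fun k => (Gam k)^-1 *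
      \sum_(1 <= j < k.+1) rho j * gam j * dotp (u j - ubar k) (- (y j *m M^T)) in
  let epsv := fun k => (Gam k)^-1 *
      \sum_(1 <= j < k.+1) rho j * gam j * dotp (v j - vbar k) (- (x j *m C^T)) in
  let d0 := dist2 (z 0%N, w 0%N) (Se f g M C d) in
  forall k : nat, (1 <= k)%N ->
    epsu k + epsv k <=
      (Gam k)^-1 * ((Gam k)^-1 *
        (\sum_(1 <= j < k.+1) rho j * gam j *
           (lam ^+ 2 * sqn (u j *m M + v j *m C - d)
            + sqn (d - v j *m C - w j.-1)))
        + 4 * d0 ^+ 2).
Proof.
(* (A.2) and (A.3) only serve the chain rule for \partial h1 and \partial h2; the easy
   inclusions subdiff_h1 and subdiff_h2 suffice here. *)
move=> pf pg [u0 [v0 [z0 saddle]]] _ _ lam_gt0 /andP[_ rhob_lt1] run.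
move=> x y Gam ubar vbar epsu epsv d0 k k_ge1.
have Gam_gt0 : 0 < Gam k := pmm_Gam_gt0 lam_gt0 rhob_lt1 run k_ge1.
set S := \sum_(1 <= j < k.+1) _ * (_ + _).
suff : (Gam k * (epsu k + epsv k) - (Gam k)^-1 * S) / 4 <= d0 ^+ 2.
  move=> bound; rewrite -[epsu k + epsv k](mulKf (lt0r_neq0 Gam_gt0)).
  rewrite ler_pM2l ?invr_gt0 //; lra.
apply: lb_le_dist2_sqr => [|Zs Ws Se_ZW].
  by exists (z0, u0 *m M); exact: saddle_point_Se pf pg saddle.
have : epsu k + epsv k
       <= (Gam k)^-1 * ((Gam k)^-1 * S + 4 * (sqn (z 0 - Zs) + sqn (w 0 - Ws))).
  exact (pmm_eps_bound pf pg lam_gt0 rhob_lt1 run k_ge1 Se_ZW).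
rewrite -(ler_pM2l Gam_gt0) mulVKf ?lt0r_neq0 //; lra.
Qed.
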